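(* There is no circulant weighing matrix $CW(143,36)$.
   Context: A circulant weighing matrix $CW(n,k)$ is an $n\times n$ circulant matrix $W$ (each row after the first is the right cyclic shift of the previous row) with all entries in $\{0,1,-1\}$ such that $WW^T=kI_n$. *)

From mathcomp Require Import all_boot all_order all_algebra.
Import GRing.Theory Num.Theory.
Local Open Scope ring_scope.

Definition circulant (n : nat) (W : 'M[int]_n) : Prop :=
  forall (i j i' j' : 'I_n),
    val i' = i.+1 -> val j' = (j.+1 %% n)%N -> W i' j' = W i j.

Definition is_CW (n k : nat) (W : 'M[int]_n) : Prop :=
  circulant n W /\
  (forall i j, W i j \in [:: 0; 1; -1]) /\
  W *m W^T = (k%:Z)%:M.

From HB Require Import structures.
From mathcomp Require Import all_boot all_order all_algebra.
From mathcomp Require Import fingroup ring zify.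
Set Implicit Arguments. Unset Strict Implicit. Unset Printing Implicit Defensive.
Import GRing.Theory Num.Theory.
Local Open Scope ring_scope.

Definition eqmod (R : pzRingType) (m : nat) (x y : R) := exists t : R, x = y + m%:R * t.

Section EqMod.
Variables (R : comPzRingType) (m : nat).
Implicit Types x y z : R.

Lemma eqmod_refl x : eqmod m x x.
Proof. by exists 0; rewrite mulr0 addr0. Qed.

Lemma eqmod_sym x y : eqmod m x y -> eqmod m y x.
Proof. by case=> t ->; exists (- t); rewrite mulrN addrK. Qed.

Lemma eqmod_trans y x z : eqmod m x y -> eqmod m y z -> eqmod m x z.
Proof. by case=> t ->; case=> u ->; exists (u + t); rewrite mulrDr addrA. Qed.

Lemma eqmodD x x' y y' : eqmod m x x' -> eqmod m y y' -> eqmod m (x + y) (x' + y').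
Proof. by case=> t ->; case=> u ->; exists (t + u); ring. Qed.

Lemma eqmodN x x' : eqmod m x x' -> eqmod m (- x) (- x').
Proof. by case=> t ->; exists (- t); ring. Qed.

Lemma eqmodM x x' y y' : eqmod m x x' -> eqmod m y y' -> eqmod m (x * y) (x' * y').
Proof. by case=> t ->; case=> u ->; exists (t * y' + x' * u + m%:R * t * u); ring. Qed.

Lemma eqmodX x y n : eqmod m x y -> eqmod m (x ^+ n) (y ^+ n).
Proof.
by move=> xy; elim: n => [|n IHn]; rewrite ?exprS; [apply: eqmod_refl | apply: eqmodM].
Qed.

Lemma eqmod_sum (I : Type) (r : seq I) (F G : I -> R) :
  (forall i, eqmod m (F i) (G i)) -> eqmod m (\sum_(i <- r) F i) (\sum_(i <- r) G i).
Proof.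
by move=> FG; elim/big_rec2: _ => [|i x y _]; [apply: eqmod_refl | apply: eqmodD].
Qed.

Lemma eqmod_mulr0 x : eqmod m (m%:R * x) 0.
Proof. by exists x; rewrite add0r. Qed.

End EqMod.

Arguments eqmod_refl {R m} x.

Lemma eqmod0_mul (R : comPzRingType) (p : nat) (x y : R) :
  eqmod p x 0 -> eqmod p y 0 -> eqmod (p * p) (x * y) 0.
Proof. by case=> t ->; case=> u ->; exists (t * u); rewrite natrM; ring. Qed.

Lemma rmorph_mul_eqmod0 (R : comPzRingType) (phi : {rmorphism R -> R}) (p r q : nat) :
  (0 < r)%N -> (1 < q)%N ->
  (forall y, eqmod p (phi y) (y ^+ r)) -> (forall y : R, eqmod p (y ^+ q) y) ->
  forall a b, eqmod (p * p) (a * b) 0 -> eqmod (p * p) (phi a * b) 0.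
Proof.
move=> r_gt0 q_gt1 phiE powE a b [c]; rewrite add0r => abE.
have phi_mul_eqmod0 (x y : R) : eqmod p (x * y) 0 -> eqmod p (phi x * y) 0.
  move=> xy0; apply: eqmod_trans (eqmodM (phiE x) (eqmod_refl y)) _.
  rewrite -(prednK r_gt0) exprSr -mulrA -(mulr0 (x ^+ r.-1)).
  exact: eqmodM (eqmod_refl _) xy0.
have [e qE] : exists e, q = e.+2 by exists q.-2; lia.
have idem (x : R) : eqmod p (x * (1 - x ^+ e.+1)) 0.
  rewrite mulrBr mulr1 -exprS -qE -(subrr x).
  exact: eqmodD (eqmod_refl _) (eqmodN (powE x)).
set u := a ^+ e.+1; set v := b ^+ e.+1.
have ubE : u * b = (p * p)%:R * (a ^+ e * c) by rewrite /u exprSr -mulrA abE; ring.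
have vaE : v * a = (p * p)%:R * (b ^+ e * c) by rewrite /v exprSr -mulrA (mulrC b) abE; ring.
have aE : a = (1 - v) * a + (p * p)%:R * (b ^+ e * c) by rewrite -vaE; ring.
have vb0 : eqmod p ((1 - v) * b) 0 by rewrite mulrC; apply: idem.
have [t tE] := eqmod0_mul (phi_mul_eqmod0 _ _ (idem a)) (phi_mul_eqmod0 _ _ vb0).
exists (t + phi (1 - v) * phi a * (a ^+ e * c) + phi (b ^+ e * c) * b).
rewrite {1}aE rmorphD !rmorphM rmorph_nat add0r.
transitivity (phi a * (1 - u) * (phi (1 - v) * b) + phi (1 - v) * phi a * (u * b)
  + (p * p)%:R * phi (b ^+ e * c) * b); first by rewrite /u; ring.
by rewrite tE add0r ubE; ring.
Qed.

Lemma eqmod_rmorph (R S : comPzRingType) (g : {rmorphism R -> S}) m x y :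
  eqmod m x y -> eqmod m (g x) (g y).
Proof. by case=> t ->; exists (g t); rewrite rmorphD rmorphM rmorph_nat. Qed.

Section Frobenius.
Variables (R : comPzRingType) (p : nat).
Hypothesis p_pr : prime p.

Lemma eqmod_exprD (x y : R) : eqmod p ((x + y) ^+ p) (x ^+ p + y ^+ p).
Proof.
have p_gt0 := prime_gt0 p_pr.
have max_ne0 : ord_max != ord0 :> 'I_p.+1 by rewrite -val_eqE /= -lt0n.
rewrite exprDn (bigD1 ord0) //= (bigD1 ord_max) //= subn0 bin0 subnn binn.
rewrite !expr0 mulr1 mul1r !mulr1n addrA.
rewrite -[X in eqmod _ _ X]addr0; apply: eqmodD; first exact: eqmod_refl.
exists (\sum_(i < p.+1 | (i != ord0) && (i != ord_max))
  (x ^+ (p - i) * y ^+ i) *+ ('C(p, i) %/ p)).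
rewrite add0r big_distrr /=; apply: eq_bigr => i /andP [i_ne0 i_ne_max].
have i_range : (0 < i < p)%N.
  rewrite lt0n -ltnS (ltn_neqAle _ p.+1) ltn_ord andbT.
  by rewrite -!val_eqE /= in i_ne0 i_ne_max; rewrite i_ne0 i_ne_max.
by rewrite mulr_natl -mulrnA divnK // prime_dvd_bin.
Qed.

Lemma eqmod_expr_sum (I : Type) (r : seq I) (F : I -> R) :
  eqmod p ((\sum_(i <- r) F i) ^+ p) (\sum_(i <- r) F i ^+ p).
Proof.
elim: r => [|i r IHr]; rewrite !(big_nil, big_cons).
  by rewrite expr0n gtn_eqF ?prime_gt0 //; apply: eqmod_refl.
apply: eqmod_trans (eqmod_exprD _ _) _; apply: eqmodD IHr; exact: eqmod_refl.
Qed.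

End Frobenius.

Lemma eqmod_fermat (p : nat) (c : int) : prime p -> eqmod p (c ^+ p) c.
Proof.
move=> p_pr; have p_gt0 := prime_gt0 p_pr.
have [n cE] : exists n : nat, (c %% p)%Z = n.
  by exists `|(c %% p)%Z|%N; rewrite gez0_abs // modz_ge0 // -lt0n.
have /dvdzP [t ctE] : (p %| c ^+ p - c)%Z.
  rewrite -eqz_mod_dvd; apply/eqP.
  by rewrite -modzXm -[in RHS]modz_mod cE -natz -natrX !natz !modz_nat (fermat_little _ p_pr).
by exists t; rewrite natz mulrC -ctE addrC subrK.
Qed.


Section GroupRing.
Variable G : finZmodType.

Definition gring : Type := {ffun G -> int}.
HB.instance Definition _ := GRing.Zmodule.on gring.

Definition gring_mul (f g : gring) : gring := [ffun k => \sum_i f i * g (k - i)].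
Definition gring_one : gring := [ffun k => (k == 0)%:R].

Lemma gring_mulC : commutative gring_mul.
Proof.
move=> f g; apply/ffunP=> k; rewrite !ffunE (reindex_inj (inv_inj (subKr k))) /=.
by apply: eq_bigr => i _; rewrite subKr mulrC.
Qed.

Lemma gring_mulA : associative gring_mul.
Proof.
move=> f g h; apply/ffunP=> k; rewrite !ffunE.
under eq_bigr do rewrite ffunE big_distrr /=.
under [RHS]eq_bigr do rewrite ffunE big_distrl /=.
rewrite [RHS]exchange_big /=; apply: eq_bigr => i _.
rewrite [RHS](reindex_inj (addrI i)) /=; apply: eq_bigr => j _.
rewrite mulrA; congr (_ * _ * h _); first by rewrite addrC addKr.
by rewrite opprD addrA.
Qed.

Lemma gring_mul1 : left_id gring_one gring_mul.
Proof.
move=> f; apply/ffunP=> k; rewrite ffunE (bigD1 0) //= big1 ?addr0.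
  by rewrite ffunE eqxx mul1r subr0.
by move=> i /negPf i_ne0; rewrite ffunE i_ne0 mul0r.
Qed.

Lemma gring_mulDl : left_distributive gring_mul +%R.
Proof.
move=> f g h; apply/ffunP=> k; rewrite !ffunE -big_split /=.
by apply: eq_bigr => i _; rewrite !ffunE mulrDl.
Qed.

Lemma gring_one_neq0 : gring_one != 0.
Proof. by apply/eqP=> /ffunP /(_ 0); rewrite !ffunE eqxx. Qed.

HB.instance Definition _ := GRing.Zmodule_isComNzRing.Build gring
  gring_mulA gring_mulC gring_mul1 gring_mulDl gring_one_neq0.

Lemma gringME (f g : gring) k : (f * g) k = \sum_i f i * g (k - i).
Proof. by rewrite ffunE. Qed.

Lemma gring1E k : (1 : gring) k = (k == 0)%:R.
Proof. by rewrite ffunE. Qed.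

Lemma gring_intrME (c : int) (f : gring) k : (c%:~R * f) k = c * f k.
Proof. by rewrite mulrzl ffunMzE mulrzz mulrC. Qed.

Lemma gring_mulfI (n : nat) (f g : gring) : (0 < n)%N -> n%:R * f = n%:R * g -> f = g.
Proof.
move=> n_gt0 /ffunP fg; apply/ffunP => k; apply/eqP.
by have := fg k; rewrite !mulr_natl !ffunMnE => /eqP; rewrite eqr_pMn2r.
Qed.

Definition gdelta (a : G) : gring := [ffun k => (k == a)%:R].

Lemma gdelta0 : gdelta 0 = 1.
Proof. by apply/ffunP=> k; rewrite !ffunE. Qed.

Lemma gdelta_mulE a (f : gring) k : (gdelta a * f) k = f (k - a).
Proof.
rewrite gringME (bigD1 a) //= big1 ?addr0 => [|i /negPf i_ne]; first by rewrite ffunE eqxx mul1r.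
by rewrite ffunE i_ne mul0r.
Qed.

Lemma gdeltaD a b : gdelta (a + b) = gdelta a * gdelta b.
Proof. by apply/ffunP=> k; rewrite gdelta_mulE !ffunE subr_eq addrC. Qed.

Lemma gdeltaMn a n : gdelta (a *+ n) = gdelta a ^+ n.
Proof. by elim: n => [|n IHn]; rewrite ?gdelta0 // mulrS exprS gdeltaD IHn. Qed.

Lemma gring_expand (f : gring) : f = \sum_i (f i)%:~R * gdelta i.
Proof.
apply/ffunP=> k; rewrite sum_ffunE (bigD1 k) //= big1 => [|i i_ne].
  by rewrite gring_intrME ffunE eqxx mulr1 addr0.
by rewrite gring_intrME ffunE eq_sym (negPf i_ne) mulr0.
Qed.

Definition gconj (f : gring) : gring := [ffun k => f (- k)].

Lemma gconj_is_zmod_morphism : zmod_morphism gconj.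
Proof. by move=> f g; apply/ffunP => k; rewrite !ffunE. Qed.

Lemma gconj_is_monoid_morphism : monoid_morphism gconj.
Proof.
split=> [|f g]; apply/ffunP => k; rewrite !ffunE ?oppr_eq0 //.
rewrite (reindex_inj oppr_inj); apply: eq_bigr => i _.
by rewrite !ffunE opprK opprB addrC.
Qed.

HB.instance Definition _ := GRing.isZmodMorphism.Build gring gring gconj
  gconj_is_zmod_morphism.
HB.instance Definition _ := GRing.isMonoidMorphism.Build gring gring gconj
  gconj_is_monoid_morphism.

Lemma mul_gconjE (f g : gring) k : (f * gconj g) k = \sum_i f i * g (i - k).
Proof. by rewrite gringME; apply: eq_bigr => i _; rewrite ffunE opprB. Qed.

Lemma gconj_gdelta a : gconj (gdelta a) = gdelta (- a).
Proof. by apply/ffunP => k; rewrite !ffunE eqr_oppLR. Qed.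

Lemma mul_gconj_eq1 (f : gring) : f * gconj f = 1 ->
  exists j c, c ^+ 2 = 1 /\ f = c%:~R * gdelta j.
Proof.
move=> /ffunP /(_ 0); rewrite mul_gconjE gring1E eqxx.
under eq_bigr do rewrite subr0 -expr2.
move=> sq1; have [j fj_ne0 | f0] := pickP (fun i => f i != 0); last first.
  by move: sq1; rewrite big1 // => i _; move/negbFE/eqP: (f0 i) ->.
have sq_ge0 i : 0 <= f i ^+ 2 by rewrite sqr_ge0.
have rest_ge0 : 0 <= \sum_(i | i != j) f i ^+ 2 by apply: sumr_ge0.
have fj_gt0 : 0 < f j ^+ 2 by rewrite exprn_even_gt0 // fj_ne0 orbT.
move: sq1; rewrite (bigD1 j) //=; move: rest_ge0 fj_gt0.
set rest := \sum_(i | _) _; set fj2 := f j ^+ 2 => rest_ge0 fj_gt0 sq1.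
have rest0 : rest = 0 by lia.
exists j, (f j); split; first by rewrite -/fj2; lia.
apply/ffunP => k; rewrite gring_intrME ffunE.
have [-> | k_ne] := eqVneq k j; first by rewrite mulr1.
have /eqP := psumr_eq0P (fun i _ => sq_ge0 i) rest0 k_ne.
by rewrite sqrf_eq0 mulr0 => /eqP.
Qed.

End GroupRing.

Section Dilation.
Variable T : finUnitRingType.

Definition dilate (u : {unit T}) (f : gring T) : gring T := [ffun k => f (k / val u)].

Section DilationMorphism.
Variable u : {unit T}.

Lemma dilate_is_zmod_morphism : zmod_morphism (dilate u).
Proof. by move=> f g; apply/ffunP => k; rewrite !ffunE. Qed.

Lemma dilate_is_monoid_morphism : monoid_morphism (dilate u).
Proof.
have uU := valP u.
split=> [|f g]; apply/ffunP => k; rewrite !ffunE.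
  by rewrite -(inj_eq (mulIr uU)) divrK // mul0r.
rewrite [RHS](reindex_inj (mulIr uU)) /=; apply: eq_bigr => i _.
by rewrite !ffunE mulrK // mulrBl mulrK.
Qed.

HB.instance Definition _ := GRing.isZmodMorphism.Build (gring T) (gring T) (dilate u)
  dilate_is_zmod_morphism.
HB.instance Definition _ := GRing.isMonoidMorphism.Build (gring T) (gring T) (dilate u)
  dilate_is_monoid_morphism.

Lemma dilate_gdelta a : dilate u (gdelta a) = gdelta (a * val u).
Proof.
apply/ffunP => k; rewrite !ffunE; congr (_%:R).
by rewrite -(inj_eq (mulIr (valP u))) (divrK (valP u)).
Qed.

Lemma dilateE (f : gring T) k : dilate u f (k * val u) = f k.
Proof. by rewrite ffunE (mulrK (valP u)). Qed.

End DilationMorphism.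

Lemma dilate1 (f : gring T) : dilate 1 f = f.
Proof. by apply/ffunP => k; rewrite ffunE invr1 mulr1. Qed.

Lemma dilateM (u v : {unit T}) (f : gring T) : dilate u (dilate v f) = dilate (v * u)%g f.
Proof. by apply/ffunP => k; rewrite !ffunE FinRing.val_unitM invrM ?(valP u) ?(valP v) // mulrA. Qed.

Lemma dilate_gconj (u : {unit T}) (f : gring T) : dilate u (gconj f) = gconj (dilate u f).
Proof. by apply/ffunP => k; rewrite !ffunE mulNr. Qed.

End Dilation.

Section GroupRingFrobenius.
Variables (T : finUnitRingType) (p : nat).
Hypothesis p_pr : prime p.

Lemma gring_frobenius (u : {unit T}) (f : gring T) :
  val u = p%:R -> eqmod p (f ^+ p) (dilate u f).
Proof.
move=> uE; rewrite {1 2}(gring_expand f) rmorph_sum.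
apply: eqmod_trans (eqmod_expr_sum p_pr _ _) _; apply: eqmod_sum => i.
rewrite rmorphM rmorph_int /= dilate_gdelta exprMn -rmorphXn -gdeltaMn uE mulr_natr.
apply: eqmodM; last exact: eqmod_refl.
by apply: eqmod_rmorph; apply: eqmod_fermat.
Qed.

Lemma gring_frobeniusX (u : {unit T}) (f : gring T) k :
  val u = p%:R -> eqmod p (f ^+ (p ^ k)) (dilate (u ^+ k)%g f).
Proof.
move=> uE; elim: k => [|k IHk]; first by rewrite expg0 dilate1; apply: eqmod_refl.
rewrite expnSr exprM expgSr -dilateM.
exact: eqmod_trans (eqmodX _ IHk) (gring_frobenius _ uE).
Qed.

Lemma dilate_mul_eqmod0 (u : {unit T}) s (a b : gring T) : val u = p%:R ->
  eqmod (p * p) (a * b) 0 -> eqmod (p * p) (dilate (u ^+ s)%g a * b) 0.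
Proof.
move=> uE; apply: (@rmorph_mul_eqmod0 _ (dilate (u ^+ s)%g) p (p ^ s) (p ^ #[u]%g)).
- by rewrite expn_gt0 prime_gt0.
- by rewrite -[1%N](expn0 p) ltn_exp2l ?prime_gt1 ?order_gt0.
- by move=> y; apply: eqmod_sym; apply: gring_frobeniusX.
by move=> y; have := gring_frobeniusX y #[u]%g uE; rewrite expg_order dilate1.
Qed.

End GroupRingFrobenius.

Lemma eqmod0_coprime_mul (R : comPzRingType) (a b : nat) (x : R) : coprime a b ->
  eqmod a x 0 -> eqmod b x 0 -> eqmod (a * b) x 0.
Proof.
move=> ab [s]; rewrite add0r => xE [t]; rewrite add0r => xE'.
have /coprimezP [[u v] /= uvE] : coprimez a b by rewrite coprimezE.
exists (u%:~R * t + v%:~R * s); rewrite add0r natrM.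
transitivity (x * (u * a + v * b)%:~R); first by rewrite uvE mulr1.
rewrite rmorphD !rmorphM /= !pmulrn mulrDr {1}xE' xE; ring.
Qed.

Lemma gconjK (G : finZmodType) : involutive (@gconj G).
Proof. by move=> f; apply/ffunP => k; rewrite !ffunE opprK. Qed.

Lemma Zp_val_add1 n (x : 'Z_n.+2) : val (x + 1) = ((val x).+1 %% n.+2)%N.
Proof. by rewrite /= modnDmr addn1. Qed.

Lemma circulantE n (W : 'M[int]_n.+2) :
  circulant n.+2 W -> forall i j, W i j = W 0 (j - i).
Proof.
move=> W_circ [i i_lt] j; elim: i i_lt j => [|i IHi] i_lt j.
  have -> : Ordinal i_lt = 0 by apply: val_inj.
  by rewrite subr0.
have i_lt' := ltnW i_lt; set i' := Ordinal i_lt'.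
have i'E : Ordinal i_lt = i' + 1 by apply: val_inj; rewrite Zp_val_add1 modn_small.
have jE : val j = ((val (j - 1)%R).+1 %% n.+2)%N by rewrite -Zp_val_add1 subrK.
rewrite (W_circ i' (j - 1)%R (Ordinal i_lt) j erefl jE) IHi i'E opprD addrA.
by rewrite (addrAC j).
Qed.

Definition first_row_gring n (W : 'M[int]_n.+2) : gring 'Z_n.+2 := [ffun j => W 0 j].

Lemma CW_first_row_mul_gconj n k (W : 'M[int]_n.+2) : is_CW n.+2 k W ->
  first_row_gring W * gconj (first_row_gring W) = k%:R.
Proof.
case=> W_circ [_ WWt]; apply/ffunP => s; rewrite mul_gconjE ffunMnE ffunE.
have := congr1 (fun M : 'M[int]_n.+2 => M 0 s) WWt; rewrite !mxE => WWt_0s.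
transitivity (\sum_j W 0 j * W^T j s).
  by apply: eq_bigr => i _; rewrite !ffunE mxE (circulantE W_circ s i).
by rewrite WWt_0s eq_sym; case: (s == 0); rewrite ?mulr1n ?mulr0n ?mul0rn // natz.
Qed.

Section Multipliers.
Variable T : finUnitRingType.
Implicit Types (u : {unit T}) (f w : gring T).

Lemma translate_mul_gconj k f :
  (gdelta k * f) * gconj (gdelta k * f) = f * gconj f.
Proof. by rewrite rmorphM /= gconj_gdelta mulrACA -gdeltaD subrr gdelta0 mul1r. Qed.

Lemma dilate_mul_gconj u n w Y : (0 < n)%N -> w * gconj w = n%:R ->
  dilate u w * gconj w = n%:R * Y -> Y * gconj Y = 1 /\ dilate u w = Y * w.
Proof.
move=> n_gt0 wwE XE; split.
  have XXE : (n%:R * Y) * gconj (n%:R * Y) = (n * n)%:R.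
    rewrite -XE rmorphM /= gconjK -dilate_gconj mulrACA -(rmorphM (dilate u)) /=.
    by rewrite wwE rmorph_nat (mulrC (gconj w)) wwE natrM.
  apply: (@gring_mulfI _ (n * n)); first by rewrite muln_gt0 n_gt0.
  by rewrite mulr1 -[RHS]XXE (rmorphM (@gconj T)) /= (rmorph_nat (@gconj T)) mulrACA natrM.
apply: (gring_mulfI n_gt0); rewrite [RHS]mulrA -XE -mulrA (mulrC (gconj w)) wwE.
by rewrite mulrC.
Qed.

Lemma dilate_translate u j c f : (1 - val u) \is a GRing.unit ->
  dilate u f = c%:~R * gdelta j * f ->
  dilate u (gdelta (j / (1 - val u)) * f) = c%:~R * (gdelta (j / (1 - val u)) * f).
Proof.
move=> u1U dilE; set k := j / (1 - val u).
have kE : k * val u + j = k.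
  by rewrite -{1}(divrK u1U j) -/k mulrBr mulr1 addrCA subrr addr0.
by rewrite rmorphM /= dilE dilate_gdelta -[in RHS]kE gdeltaD; ring.
Qed.

Lemma dilate_eq_opp u n f : (u ^+ n = 1)%g -> odd n -> dilate u f = - f -> f = 0.
Proof.
move=> un1 n_odd dilE.
have dilX m : dilate (u ^+ m)%g f = (-1) ^+ m * f.
  elim: m => [|m IHm]; first by rewrite expg0 dilate1 mul1r.
  by rewrite expgSr -dilateM IHm rmorphM rmorphXn rmorphN1 /= dilE exprS; ring.
have := dilX n; rewrite un1 dilate1 -signr_odd n_odd expr1 mulN1r => fE.
apply: (@gring_mulfI _ 2) => //.
by rewrite mulr0 mulr_natl mulr2n {2}fE subrr.
Qed.

End Multipliers.

Fixpoint dotz (v w : seq int) : int :=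
  if v is x :: v' then if w is y :: w' then x * y + dotz v' w' else 0 else 0.

Lemma dotzE (v w : seq int) : size v = size w ->
  dotz v w = \sum_(i < size v) v`_i * w`_i.
Proof.
elim: v w => [|x v IHv] [|y w] //=; first by rewrite big_ord0.
by move=> [sz_vw]; rewrite big_ord_recl IHv.
Qed.

Lemma dotz_map (I : Type) (F : I -> int) (r : seq I) :
  dotz (map F r) (map F r) = \sum_(i <- r) F i ^+ 2.
Proof. by elim: r => [|i r IHr]; rewrite ?big_nil ?big_cons //= IHr. Qed.

Lemma nth_rot (T : Type) (x0 : T) (s : seq T) n i : (n <= size s)%N -> (i < size s)%N ->
  nth x0 (rot n s) i = nth x0 s ((i + n) %% size s).
Proof.
move=> n_le i_lt; rewrite /rot nth_cat size_drop.
case: ltnP => [i_lt' | i_ge]; first by rewrite nth_drop modn_small addnC //; lia.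
have -> : (i + n = (i + n - size s) + size s)%N by lia.
rewrite nth_take ?modnDr ?modn_small; try lia.
by congr nth; lia.
Qed.

Lemma sum_count_mem (n : nat) (F : nat -> int) (r : seq nat) : all (fun k => k < n)%N r ->
  \sum_(k <- r) F k = \sum_(k < n) (count_mem (k : nat) r)%:R * F k.
Proof.
elim: r => [_|x r IHr /= /andP [x_lt r_lt]]; first by rewrite big_nil big1 // => k; rewrite mul0r.
rewrite big_cons IHr //; under [RHS]eq_bigr do rewrite natrD mulrDl.
rewrite big_split /=; congr (_ + _).
rewrite (bigD1 (Ordinal x_lt)) //= eqxx mul1r big1 ?addr0 // => k.
by rewrite -val_eqE /= eq_sym => /negPf ->; rewrite mul0r.
Qed.

Fixpoint sign_patterns (sz : seq nat) (r : nat) : seq (seq int) :=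
  if sz is s :: sz' then
    [seq 0 :: c | c <- sign_patterns sz' r] ++
    (if (s <= r)%N then [seq x :: c | x <- [:: 1; -1], c <- sign_patterns sz' (r - s)] else [::])
  else if r == 0%N then [:: [::]] else [::].

Definition sq_weight (sz : seq nat) (c : seq int) : int :=
  dotz (map Posz sz) [seq x ^+ 2 | x <- c].

Lemma sq_weight_ge0 sz c : 0 <= sq_weight sz c.
Proof.
rewrite /sq_weight; elim: sz c => [|s sz IHsz] [|x c] //=.
by apply: addr_ge0 => //; apply: mulr_ge0; rewrite ?sqr_ge0.
Qed.

Lemma mem_sign_patterns (sz : seq nat) (c : seq int) (r : nat) :
  size c = size sz -> all (mem [:: 0; 1; -1]) c -> sq_weight sz c = r ->
  c \in sign_patterns sz r.
Proof.
elim: sz c r => [|s sz IHsz] [|x c] r //=; first by case: r.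
move=> [sz_c] /andP [x_sign c_sign]; rewrite /sq_weight /= -/(sq_weight sz c) mem_cat.
have [-> | x_ne0] := eqVneq x 0.
  by rewrite expr0n mulr0 add0r => /IHsz-/(_ sz_c c_sign) c_in; rewrite map_f.
have -> : x ^+ 2 = 1 by move: x_sign x_ne0; rewrite !inE => /or3P [] /eqP ->.
move=> wE; have w_ge0 := sq_weight_ge0 sz c.
have s_le : (s <= r)%N by lia.
have /IHsz-/(_ sz_c c_sign) c_in : sq_weight sz c = (r - s)%N by lia.
rewrite s_le /= !mem_cat.
by move: x_sign x_ne0; rewrite !inE => /or3P [] /eqP -> //= _; rewrite map_f ?orbT.
Qed.

Definition autocorr (v : seq int) (s : nat) : int := dotz v (rot s v).

(* Stated with [find] rather than [has]: [vm_compute] evaluates both arguments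
   of [||], whereas the test in [find] stops at the first nonzero shift. *)
Definition imperfect (v : seq int) : bool :=
  (find (fun s => autocorr v s != 0) (iota 1 (size v).-1) < (size v).-1)%N.

Lemma imperfectP (v : seq int) :
  imperfect v -> exists2 s, (0 < s < size v)%N & autocorr v s != 0.
Proof.
rewrite /imperfect -[X in (_ < X)%N](size_iota 1) -has_find => /hasP [s].
by rewrite mem_iota => s_range; exists s => //; lia.
Qed.

Definition class_patterns_imperfect (idx : seq nat) (n w : nat) : bool :=
  all (fun c => imperfect [seq c`_k | k <- idx])
      (sign_patterns [seq count_mem k idx | k <- iota 0 n] w).

Lemma class_patterns_imperfectP (idx : seq nat) (n w : nat) (c : seq int) :
  class_patterns_imperfect idx n w -> all (fun k => k < n)%N idx ->
  size c = n -> all (mem [:: 0; 1; -1]) c -> \sum_(k <- idx) c`_k ^+ 2 = w ->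
  imperfect [seq c`_k | k <- idx].
Proof.
move=> /allP imperfect_all idx_lt sz_c c_sign wE; apply: imperfect_all.
apply: mem_sign_patterns => //; first by rewrite size_map size_iota.
rewrite /sq_weight dotzE ?size_map ?size_iota // -wE (sum_count_mem _ idx_lt).
by apply: eq_bigr => k _; rewrite (nth_map 0%N) ?(nth_map 0%N) ?(nth_map 0) ?nth_iota ?size_map ?size_iota ?sz_c ?natz.
Qed.

Definition mul3 (i : nat) : nat := (3 * i) %% 143.
Definition mul3_orbit_reps : seq nat := [:: 0; 1; 2; 4; 5; 7; 10; 11; 13; 20; 22; 26; 29; 44; 77].
Definition mul3_orbit (i : nat) : nat := find (mem (traject mul3 i 15)) mul3_orbit_reps.
Definition mul3_orbits : seq nat := map mul3_orbit (iota 0 143).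

Lemma mul3_orbitsP : all (fun i => has (mem (traject mul3 i 15)) mul3_orbit_reps) (iota 0 143).
Proof. by vm_compute. Qed.

Lemma mul3_patterns_imperfect : class_patterns_imperfect mul3_orbits 15 36.
Proof. by vm_compute. Qed.

Lemma autocorr_mkseq (n : nat) (f : 'Z_n.+2 -> int) (s : nat) : (s < n.+2)%N ->
  autocorr (mkseq (fun i => f i%:R) n.+2) s = \sum_i f i * f (i + s%:R).
Proof.
move=> s_lt; rewrite /autocorr dotzE ?size_rot // size_mkseq.
apply: eq_bigr => i _; rewrite nth_rot ?size_mkseq ?(ltnW s_lt) // !nth_mkseq ?ltn_pmod //.
by rewrite Zp_nat_mod // natrD natr_Zp.
Qed.

Lemma mul3_invariant_imperfect (f : 'Z_143 -> int) :
  (forall i, f (i * 3%:R) = f i) -> (forall i, f i \in [:: 0; 1; -1]) ->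
  \sum_i f i ^+ 2 = 36 -> exists2 s : 'Z_143, s != 0 & \sum_i f i * f (i + s) != 0.
Proof.
move=> f_mul3 f_sign f_weight; set v := mkseq (fun i => f i%:R) 143.
have v_traject j r : (j < 143)%N -> r \in traject mul3 j 15 -> v`_r = v`_j.
  move=> j_lt /trajectP [k _ ->] {r}; elim: k => //= k <-.
  have iter_lt : (iter k mul3 j < 143)%N by case: k => //= k; rewrite ltn_pmod.
  by rewrite !nth_mkseq ?ltn_pmod // Zp_nat_mod // natrM mulrC f_mul3.
set c := [seq v`_r | r <- mul3_orbit_reps].
have orbits_lt : all (fun k => k < 15)%N mul3_orbits.
  apply/allP => _ /mapP [i i_in ->].
  by have := allP mul3_orbitsP i i_in; rewrite has_find.
have orbit_lt i : (i < 143)%N -> (mul3_orbit i < 15)%N.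
  by move=> i_lt; have := allP mul3_orbitsP i; rewrite mem_iota has_find; apply.
have size_orbits : size mul3_orbits = 143 by rewrite size_map size_iota.
have nth_orbits i : (i < 143)%N -> nth 0%N mul3_orbits i = mul3_orbit i.
  by move=> i_lt; rewrite (nth_map 0%N) ?size_iota ?nth_iota.
have vE : v = [seq c`_k | k <- mul3_orbits].
  apply: (@eq_from_nth _ 0); first by rewrite size_map size_orbits size_mkseq.
  rewrite size_mkseq => i i_lt.
  rewrite [RHS](nth_map 0%N); last by rewrite size_orbits.
  rewrite [in RHS]nth_orbits; last exact: i_lt.
  rewrite [RHS](nth_map 0%N); last exact: orbit_lt.
  have rep_in : nth 0%N mul3_orbit_reps (mul3_orbit i) \in traject mul3 i 15.
    apply: (nth_find 0%N); have := allP mul3_orbitsP i; rewrite mem_iota; apply.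
    by rewrite i_lt.
  exact: esym (v_traject _ _ i_lt rep_in).
have v_imperfect : imperfect v.
  rewrite vE; apply: (class_patterns_imperfectP mul3_patterns_imperfect orbits_lt).
  - by rewrite size_map.
  - apply/allP => _ /mapP [r _ ->]; case: (ltnP r 143) => [r_lt | r_ge].
      by rewrite nth_mkseq; [apply: f_sign | exact: r_lt].
    by rewrite nth_default ?size_mkseq.
  rewrite -dotz_map -vE.
  have -> : dotz v v = autocorr v 0 by rewrite /autocorr rot0.
  rewrite autocorr_mkseq; last by [].
  rewrite (eq_bigr (fun i => f i ^+ 2)) => [|i _]; last by rewrite addr0 expr2.
  exact: f_weight.
have [s /andP [s_gt0 s_lt] autocorr_s] := imperfectP v_imperfect.
rewrite size_mkseq in s_lt.
exists s%:R; last by rewrite -autocorr_mkseq.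
apply/eqP => /(congr1 (@nat_of_ord _)).
rewrite val_Zp_nat; last by [].
rewrite modn_small; last exact: s_lt.
by move=> s0; rewrite s0 in s_gt0.
Qed.

Lemma gring_natrE (G : finZmodType) n (k : G) : (n%:R : gring G) k = (k == 0)%:R *+ n.
Proof. by rewrite ffunMnE ffunE. Qed.

Lemma Z143_unit2 : (2%:R : 'Z_143) \is a GRing.unit. Proof. by rewrite unitZpE. Qed.
Lemma Z143_unit3 : (3%:R : 'Z_143) \is a GRing.unit. Proof. by rewrite unitZpE. Qed.
Definition unit2 : {unit 'Z_143} := FinRing.unit 'Z_143 Z143_unit2.
Definition unit3 : {unit 'Z_143} := FinRing.unit 'Z_143 Z143_unit3.

Lemma unit2X28 : (unit2 ^+ 28)%g = unit3.
Proof. by apply: val_inj; rewrite FinRing.val_unitX; apply/eqP; vm_compute. Qed.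

Lemma unit3X15 : (unit3 ^+ 15)%g = 1%g.
Proof. by apply: val_inj; rewrite FinRing.val_unitX; apply/eqP; vm_compute. Qed.

Lemma unit3_subr1 : 1 - val unit3 \is a GRing.unit.
Proof. by vm_compute. Qed.

Lemma dilate3_eigen_weighing_absurd (f : gring 'Z_143) (c : int) :
  c ^+ 2 = 1 -> dilate unit3 f = c%:~R * f -> f * gconj f = 36%:R ->
  (forall i, f i \in [:: 0; 1; -1]) -> False.
Proof.
move=> c2 fE ffE f_sign.
have autocorrE s : \sum_i f i * f (i + s) = (s == 0)%:R *+ 36.
  have := congr1 (fun g : gring 'Z_143 => g (- s)) ffE.
  rewrite /= mul_gconjE gring_natrE oppr_eq0 => <-.
  by apply: eq_bigr => i _; rewrite opprK.
have f_weight : \sum_i f i ^+ 2 = 36.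
  by rewrite -[RHS](autocorrE 0); apply: eq_bigr => i _; rewrite addr0 expr2.
have /orP [/eqP c1 | /eqP cN1] : (c == 1) || (c == -1) by rewrite -sqrf_eq1 c2.
  rewrite c1 mulr1z mul1r in fE.
  have f_mul3 i : f (i * 3%:R) = f i.
    by change (f (i * val unit3) = f i); rewrite -{1}fE dilateE.
  have [s s_ne0] := mul3_invariant_imperfect f_mul3 f_sign f_weight.
  by rewrite autocorrE (negPf s_ne0) mul0rn eqxx.
rewrite cN1 mulrN1z mulN1r in fE.
have f0 := dilate_eq_opp unit3X15 isT fE.
by move: f_weight; rewrite f0 big1 // => i _; rewrite ffunE expr0n.
Qed.

Theorem proposition5 : ~ (exists W : 'M[int]_143, is_CW 143 36 W).
Proof.
move=> [W W_CW]; set w := first_row_gring W.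
have wwE : w * gconj w = 36%:R := CW_first_row_mul_gconj W_CW.
have ww0 p q : (p * p * q = 36)%N -> eqmod (p * p) (w * gconj w) 0.
  by move=> pqE; exists q%:R; rewrite wwE add0r -natrM pqE.
have [Y XE] : exists Y, dilate unit3 w * gconj w = 36%:R * Y.
  have X4 := dilate_mul_eqmod0 (isT : prime 2) 28 (erefl : val unit2 = 2%:R) (ww0 2 9 erefl).
  have X9 := dilate_mul_eqmod0 (isT : prime 3) 1 (erefl : val unit3 = 3%:R) (ww0 3 4 erefl).
  rewrite unit2X28 in X4; rewrite expg1 in X9.
  by have [Y] := eqmod0_coprime_mul (isT : coprime 4 9) X4 X9; rewrite add0r; exists Y.
have [YY dilE] := dilate_mul_gconj (isT : (0 < 36)%N) wwE XE.
have [j [c [c2 YE]]] := mul_gconj_eq1 YY; rewrite YE in dilE.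
apply: (dilate3_eigen_weighing_absurd c2 (dilate_translate unit3_subr1 dilE)).
  by rewrite translate_mul_gconj.
by move=> i; rewrite gdelta_mulE ffunE; case: W_CW => _ [W_sign _]; apply: W_sign.
Qed.
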